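(* Let $P$ be a poset and let $2\leq\alpha,\beta\leq\omega$. If $P$ is $(\alpha,\beta)$-representable, then $\exists$ has an $\omega$-strategy in the $(\alpha,\beta)$-game with starting position $(\{p\},\{q\})$ for all $p,q\in P$ with $p\not\leq q$. Moreover, if $P$ is countable, then the converse holds.
   Context: A poset $P$ is $(\alpha,\beta)$-representable if there is a set $X$ and an order embedding $h:P\to\wp(X)$ ($\wp(X)$ ordered by inclusion) such that whenever $S\subseteq P$ with $|S|<\alpha$ and $\bigwedge S$ exists in $P$ then $h(\bigwedge S)=\bigcap h[S]$ (with $\bigcap\emptyset=X$), and whenever $T\subseteq P$ with $|T|<\beta$ and $\bigvee T$ exists in $P$ then $h(\bigvee T)=\bigcup h[T]$. The $(\alpha,\beta)$-game on $P$ with starting position $(U_0,V)$, $U_0,V\subseteq P$, is played between $\forall$ and $\exists$ in rounds $0,1,2,\ldots$; a set $U$ is maintained, initially $U_0$, with $V$ fixed. In each round $\forall$ moves and then $\exists$ responds: (1) if $b\geq a$ for some $a\in U$, $\forall$ may play $(b)$ and $\exists$ must add $b$ to $U$; (2) if $A\subseteq U$ with $|A|<\alpha$ and $\bigwedge A$ exists in $P$, $\forall$ may play $A$ and $\exists$ must add $\bigwedge A$ to $U$; (3) if $B\subseteq P$ with $|B|<\beta$ and $\bigvee B$ exists in $P$ and lies in $U$, $\forall$ may play $B$ and $\exists$ must choose some $b\in B$ and add it to $U$. $\forall$ wins in round $n$ if $U\cap V\neq\emptyset$ at the beginning of round $n$. $\exists$ has an $\omega$-strategy if she can guarantee that $\forall$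 never wins, however he plays. *)

From Stdlib Require List.
From mathcomp Require Import all_boot all_order.
Set Implicit Arguments. Unset Strict Implicit. Unset Printing Implicit Defensive.
Import Order.TTheory.
Local Open Scope order_scope.

(* Cardinal bounds alpha with 2 <= alpha <= omega:  Some n  is the finite
   cardinal n, None is omega. *)
Definition cbound := option nat.
Definition valid_bound (a : cbound) : Prop :=
  match a with Some n => (2 <= n)%N | None => True end.

Definition card_lt {T : Type} (S : T -> Prop) (a : cbound) : Prop :=
  match a with
  | Some n => exists l : list T, (size l < n)%N /\ forall x, S x -> List.In x l
  | None => exists l : list T, forall x, S x -> List.In x l
  end.

Section Poset.
Context {d : Order.disp_t} {P : porderType d}.

Definition is_glb (S : P -> Prop) (m : P) : Prop :=
  (forall s, S s -> m <= s) /\ (forall l, (forall s, S s -> l <= s) -> l <= m).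
Definition is_lub (S : P -> Prop) (j : P) : Prop :=
  (forall s, S s -> s <= j) /\ (forall u, (forall s, S s -> s <= u) -> j <= u).

Definition representable (a b : cbound) : Prop :=
  exists (X : Type) (h : P -> X -> Prop),
    (forall p q : P, p <= q <-> (forall x, h p x -> h q x)) /\
    (forall (S : P -> Prop) (m : P), card_lt S a -> is_glb S m ->
       forall x, h m x <-> (forall s, S s -> h s x)) /\
    (forall (T : P -> Prop) (j : P), card_lt T b -> is_lub T j ->
       forall x, h j x <-> (exists t, T t /\ h t x)).

Inductive move : Type :=
  | MUp of P
  | MMeet of (P -> Prop)
  | MJoin of (P -> Prop).

Definition legal_move (a b : cbound) (U : P -> Prop) (mv : move) : Prop :=
  match mv with
  | MUp c => exists u, U u /\ u <= c
  | MMeet A => (forall x, A x -> U x) /\ card_lt A a /\ exists m, is_glb A m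
  | MJoin B => card_lt B b /\ exists j, is_lub B j /\ U j
  end.

Definition legal_resp (mv : move) (r : P) : Prop :=
  match mv with
  | MUp c => r = c
  | MMeet A => is_glb A r
  | MJoin B => B r
  end.

(* A strategy for exists: given the history of the play (forall's moves with
   the elements added) and forall's current move, the element to add. *)
Definition strategy := list (move * P) -> move -> P.

Fixpoint history (sigma : strategy) (ms : nat -> move) (n : nat)
  : list (move * P) :=
  match n with
  | 0 => nil
  | k.+1 => let h := history sigma ms k in
            h ++ ((ms k, sigma h (ms k)) :: nil)
  end.

Definition position (U0 : P -> Prop) (h : list (move * P)) (x : P) : Prop :=
  U0 x \/ exists mv, List.In (mv, x) h.

(* exists has an omega-strategy in the (a,b)-game starting at (U0,V):
   a strategy such that, as long as forall has played legally, exists'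
   responses are legal and U never meets V (at the beginning of any round). *)
Definition E_omega_strategy (a b : cbound) (U0 V : P -> Prop) : Prop :=
  exists sigma : strategy, forall (ms : nat -> move) (n : nat),
    (forall k, (k < n)%N ->
       legal_move a b (position U0 (history sigma ms k)) (ms k)) ->
    (forall k, (k < n)%N -> legal_resp (ms k) (sigma (history sigma ms k) (ms k))) /\
    (forall x, position U0 (history sigma ms n) x -> ~ V x).

End Poset.

Definition countable_type (T : Type) : Prop :=
  exists f : T -> nat, forall x y, f x = f y -> x = y.

From mathcomp Require Import all_boot all_order.
From Stdlib Require Import Classical ClassicalEpsilon.
From Stdlib Require List.

(* Points x of a representation h correspond to (alpha,beta)-prime filters
   {r | x \in h r}, and conversely the prime filters separating all pairs
   p, q with ~ p <= q form the points of a representation.  Given a prime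
   filter containing p but not q, exists wins from ({p},{q}) by always
   answering inside it.  Conversely, since alpha, beta <= omega every move of
   forall is described by a finite list, so for countable P these moves can be
   enumerated, each infinitely often; letting forall play each of them as soon
   as it is legal against a winning strategy of exists, the union of the
   positions of this single play is closed under all moves, i.e. it is a prime
   filter, and it contains p but not q. *)

Set Implicit Arguments. Unset Strict Implicit. Unset Printing Implicit Defensive.
Import Order.TTheory.
Local Open Scope order_scope.

Lemma injective_unbounded (F : nat -> nat) : injective F ->
  forall N, exists j, (N <= F j)%N.
Proof.
move=> F_inj N; apply: NNPP => small.
have F_lt j : (F j < N)%N by rewrite ltnNge; apply/negP => ?; apply: small; exists j.
have uniqF : uniq (map F (iota 0 N.+1)) by rewrite map_inj_uniq // iota_uniq.
have subF : {subset map F (iota 0 N.+1) <= iota 0 N}.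
  by move=> _ /mapP [j _ ->]; rewrite mem_iota add0n F_lt.
by have := uniq_leq_size uniqF subF; rewrite size_map !size_iota ltnn.
Qed.

Lemma list_restrict (T : Type) (S : T -> Prop) (l : list T) :
  exists2 L : list T, (size L <= size l)%N &
    forall x, List.In x L <-> S x /\ List.In x l.
Proof.
elim: l => [|y l [L sizeL memL]]; first by exists nil => // x; split=> [[]|[_ []]].
have [Sy|nSy] := classic (S y).
- exists (y :: L) => // x; rewrite /= memL.
  by split=> [[<-|[]]|[Sx [<-|]]]; auto.
- exists L => [|x]; first exact: leqW.
  by rewrite /= memL; split=> [[]|[Sx [Exy|]]]; [auto|subst|auto].
Qed.

Lemma card_lt_list (T : Type) (S : T -> Prop) (c : cbound) : card_lt S c ->
  exists2 L : list T, card_lt (fun x => List.In x L) c &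
    forall x, List.In x L <-> S x.
Proof.
have restrict l : (forall x, S x -> List.In x l) -> exists2 L : list T,
    (size L <= size l)%N & forall x, List.In x L <-> S x.
  move=> Sl; have [L sizeL memL] := list_restrict S l.
  by exists L => // x; rewrite memL; intuition.
case: c => [n [l [sizel /restrict [L sizeL memL]]] | [l /restrict [L _ memL]]].
- by exists L => //; exists L; split=> //; exact: leq_ltn_trans sizeL sizel.
- by exists L => //; exists L.
Qed.

Section Representations.
Context {d : Order.disp_t} {P : porderType d}.
Variables a b : cbound.

Lemma is_glb_ext (S S' : P -> Prop) m :
  (forall x, S x <-> S' x) -> is_glb S m -> is_glb S' m.
Proof.
move=> SS' [lbm glbm]; split=> [s /SS'|l lbl]; first exact: lbm.
by apply: glbm => s /SS'; apply: lbl.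
Qed.

Lemma is_lub_ext (S S' : P -> Prop) j :
  (forall x, S x <-> S' x) -> is_lub S j -> is_lub S' j.
Proof.
move=> SS' [ubj lubj]; split=> [s /SS'|u ubu]; first exact: ubj.
by apply: lubj => s /SS'; apply: ubu.
Qed.

Lemma is_glb_unique (S : P -> Prop) m m' : is_glb S m -> is_glb S m' -> m = m'.
Proof.
by move=> [lbm glbm] [lbm' glbm']; apply/le_anti; rewrite glbm' ?glbm.
Qed.

Definition prime_filter (F : P -> Prop) : Prop :=
  [/\ forall u c, F u -> u <= c -> F c,
      forall S m, card_lt S a -> is_glb S m -> (forall s, S s -> F s) -> F m &
      forall T j, card_lt T b -> is_lub T j -> F j -> exists2 t, T t & F t].

Definition representation (X : Type) (h : P -> X -> Prop) : Prop :=
  (forall p q : P, p <= q <-> (forall x, h p x -> h q x)) /\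
  (forall (S : P -> Prop) (m : P), card_lt S a -> is_glb S m ->
     forall x, h m x <-> (forall s, S s -> h s x)) /\
  (forall (T : P -> Prop) (j : P), card_lt T b -> is_lub T j ->
     forall x, h j x <-> (exists t, T t /\ h t x)).

Lemma representation_prime_filter X (h : P -> X -> Prop) :
  representation h -> forall x, prime_filter (fun r => h r x).
Proof.
move=> [emb [meet join]] x; split.
- by move=> u c hux /emb; apply.
- by move=> S m Sa glbm /(meet _ _ Sa glbm).
- by move=> T j Tb lubj /(join _ _ Tb lubj) [t []]; exists t.
Qed.

Lemma representation_separates X (h : P -> X -> Prop) p q :
  representation h -> ~ p <= q -> exists x, h p x /\ ~ h q x.
Proof.
move=> [emb _] npq; apply: NNPP => none; apply/npq/emb => x hpx.
by apply: NNPP => nhqx; apply: none; exists x.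
Qed.

Lemma prime_filters_representable :
  (forall p q : P, ~ p <= q -> exists2 F, prime_filter F & F p /\ ~ F q) ->
  representable (P := P) a b.
Proof.
move=> separate; exists {F : P -> Prop | prime_filter F}, (fun r F => sval F r).
split; [|split].
- move=> p q; split=> [pq [F [up _ _]] /= Fp|incl]; first exact: up pq.
  apply/idPn => /negP /separate [F primeF [Fp nFq]].
  exact/nFq/(incl (exist _ F primeF)).
- move=> S m Sa glbm [F [up meet _]] /=; split=> [Fm s Ss|]; last exact: meet.
  exact: up Fm (glbm.1 s Ss).
- move=> T j Tb lubj [F [up _ join]] /=; split=> [/(join _ _ Tb lubj) [t]|[t [Tt Ft]]].
    by exists t.
  exact: up Ft (lubj.1 t Tt).
Qed.

End Representations.

Section Strategies.
Context {d : Order.disp_t} {P : porderType d}.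
Variables a b : cbound.

Definition winning_strategy (U0 V : P -> Prop) (sigma : strategy) : Prop :=
  forall (ms : nat -> move) (n : nat),
    (forall k, (k < n)%N ->
       legal_move a b (position U0 (history sigma ms k)) (ms k)) ->
    (forall k, (k < n)%N -> legal_resp (ms k) (sigma (history sigma ms k) (ms k))) /\
    (forall x, position U0 (history sigma ms n) x -> ~ V x).

Lemma position_snoc (U0 : P -> Prop) hs mv r y :
  position U0 (hs ++ (mv, r) :: nil) y <-> position U0 hs y \/ y = r.
Proof.
rewrite /position; split=> [[U0y|[mv' hin]]|[[U0y|[mv' hsy]]|->]].
- by left; left.
- case: (List.in_app_or _ _ _ hin) => [hsy|[[_ <-]|[]]]; last by right.
  by left; right; exists mv'.
- by left.
- by right; exists mv'; apply: List.in_or_app; left.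
- by right; exists mv; apply: List.in_or_app; right; left.
Qed.

Lemma legal_move_mono (U U' : P -> Prop) (mv : move) :
  (forall x, U x -> U' x) -> legal_move a b U mv -> legal_move a b U' mv.
Proof.
move=> UU'; case: mv => [c [u [Uu uc]]|A [AU AS]|B [Bb [j [lubj Uj]]]].
- by exists u; split; [apply: UU'|].
- by split=> // x /AU /UU'.
- by split=> //; exists j; split; [|apply: UU'].
Qed.

Lemma prime_filter_response (F U : P -> Prop) (mv : move) :
  prime_filter a b F -> (forall x, U x -> F x) -> legal_move a b U mv ->
  exists r, legal_resp mv r /\ F r.
Proof.
move=> [up meet join] UF; case: mv => [c [u [Uu uc]]|A [AU [Aa [m glbm]]]|B [Bb [j [lubj Uj]]]].
- by exists c; split=> //; apply: up (UF _ Uu) uc.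
- by exists m; split=> //; apply: meet Aa glbm _ => s /AU /UF.
- by have [t Bt Ft] := join _ _ Bb lubj (UF _ Uj); exists t.
Qed.

Definition filter_strategy (inhP : inhabited P) (F : P -> Prop) : strategy :=
  fun _ mv => epsilon inhP (fun r => legal_resp mv r /\ F r).

Lemma filter_strategy_wins inhP (F U0 V : P -> Prop) :
  prime_filter a b F -> (forall x, U0 x -> F x) -> (forall x, F x -> ~ V x) ->
  winning_strategy U0 V (filter_strategy inhP F).
Proof.
move=> primeF U0F FV ms n legal.
set sigma := filter_strategy inhP F.
suff [resp inF] : (forall k, (k < n)%N -> legal_resp (ms k) (sigma (history sigma ms k) (ms k)))
                  /\ (forall x, position U0 (history sigma ms n) x -> F x).
  by split=> // x /inF /FV.
elim: n legal => [|n IHn] legal.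
  by split=> // x [/U0F|[mv []]].
have [resp inF] := IHn (fun k kn => legal k (ltnW kn)).
have := epsilon_spec inhP _ (prime_filter_response primeF inF (legal n (ltnSn n))).
rewrite -/(sigma _ _) => -[respn Fn].
split=> [k|x]; first by rewrite ltnS leq_eqVlt => /predU1P [->|/resp].
by move=> /position_snoc [/inF|->].
Qed.

End Strategies.

Section ExhaustivePlay.
Context {d : Order.disp_t} {P : porderType d}.
Variables (a b : cbound) (f : P -> nat) (p q : P) (sigma : @strategy d P).
Hypothesis f_inj : forall x y, f x = f y -> x = y.
Hypothesis sigma_wins : winning_strategy a b (fun x => x = p) (fun x => x = q) sigma.

Definition nat_to_P (n : nat) : P := epsilon (inhabits p) (fun x => f x = n).

Lemma f_cancel : cancel f nat_to_P.
Proof. by move=> x; apply/f_inj/(epsilon_spec (inhabits p) (fun y => f y = f x)); exists x. Qed.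

Definition decode_move (c : nat * seq nat) : @move d P :=
  let L := map nat_to_P c.2 in
  match c.1 with
  | 0 => MUp (head p L)
  | 1 => MMeet (fun x => List.In x L)
  | _ => MJoin (fun x => List.In x L)
  end.

(* The last component of a code is a repetition index, so that every decoded
   move is proposed in infinitely many rounds. *)
Definition candidate (k : nat) : @move d P :=
  if (unpickle k : option ((nat * seq nat) * nat)) is Some (c, _)
  then decode_move c else MUp p.

Definition forall_move (hs : list (@move d P * P)) (k : nat) : @move d P :=
  if excluded_middle_informative
       (legal_move a b (position (fun x => x = p) hs) (candidate k))
  then candidate k else MUp p.

Fixpoint play (k : nat) : list (@move d P * P) :=
  if k is k'.+1 then
    let mv := forall_move (play k') k' in play k' ++ (mv, sigma (play k') mv) :: nil
  else nil.

Definition moves (k : nat) : @move d P := forall_move (play k) k.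
Definition response (k : nat) : P := sigma (play k) (moves k).
Definition reached (x : P) : Prop := exists n, position (fun x => x = p) (play n) x.

Lemma history_play k : history sigma moves k = play k.
Proof. by elim: k => //= k ->. Qed.

Lemma moves_legal k : legal_move a b (position (fun x => x = p) (play k)) (moves k).
Proof.
rewrite /moves /forall_move; destruct excluded_middle_informative => //.
by exists p; split; [left|].
Qed.

Lemma play_won n :
  (forall k, (k < n)%N -> legal_resp (moves k) (response k)) /\
  (forall x, position (fun x => x = p) (play n) x -> x <> q).
Proof.
have [k _|resp notq] := @sigma_wins moves n; first by rewrite history_play; apply: moves_legal.
by split=> [k /resp|x]; rewrite ?history_play // -history_play; apply: notq.
Qed.

Lemma reached_p : reached p.
Proof. by exists 0; left. Qed.

Lemma not_reached_q : ~ reached q.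
Proof. by move=> [n /(proj2 (play_won n))]. Qed.

Lemma reached_response k : reached (response k).
Proof. by exists k.+1; apply/position_snoc; right. Qed.

Lemma position_play_mono n m x : (n <= m)%N ->
  position (fun x => x = p) (play n) x -> position (fun x => x = p) (play m) x.
Proof.
elim: m => [|m IHm]; first by rewrite leqn0 => /eqP ->.
rewrite leq_eqVlt => /predU1P [-> //|/IHm nm /nm pnx].
by apply/position_snoc; left.
Qed.

Lemma reached_list (L : list P) : (forall x, List.In x L -> reached x) ->
  exists n, forall x, List.In x L -> position (fun x => x = p) (play n) x.
Proof.
elim: L => [|y L IHL] reachedL; first by exists 0.
have [n Ln] := IHL (fun x Lx => reachedL x (or_intror Lx)).
have [m ym] := reachedL y (or_introl erefl).
exists (maxn n m) => x [<-|]; [move: ym|move/Ln]; apply: position_play_mono.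
  exact: leq_maxr.
exact: leq_maxl.
Qed.

Lemma candidate_often c N : exists2 k, (N <= k)%N & candidate k = decode_move c.
Proof.
have pickle_inj : injective (fun j => pickle ((c, j) : (nat * seq nat) * nat)).
  by move=> j1 j2 /(pcan_inj pickleK) [].
have [j Nj] := injective_unbounded pickle_inj N.
by exists (pickle ((c, j) : (nat * seq nat) * nat)); rewrite // /candidate pickleK.
Qed.

Lemma decode_move_answered c n :
  legal_move a b (position (fun x => x = p) (play n)) (decode_move c) ->
  exists k, legal_resp (decode_move c) (response k) /\ reached (response k).
Proof.
move=> legal_c; have [k nk cand_k] := candidate_often c n.
have moves_k : moves k = decode_move c.
  rewrite /moves /forall_move.
  destruct excluded_middle_informative as [|illegal]; first exact: cand_k.
  case: illegal.
  rewrite cand_k; apply: legal_move_mono legal_c => x; exact: position_play_mono.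
exists k; split; last exact: reached_response.
by rewrite -moves_k; apply: (proj1 (play_won k.+1)).
Qed.

Lemma decode_list (L : list P) : map nat_to_P (map f L) = L.
Proof. by rewrite -map_comp (eq_map f_cancel) map_id. Qed.

Lemma reached_prime_filter : prime_filter a b reached.
Proof.
split.
- move=> u c [n un] uc.
  have [|k [resp_k reached_k]] := @decode_move_answered (0, f c :: nil) n.
    by rewrite /= f_cancel; exists u.
  by move: resp_k; rewrite /= f_cancel => <-.
- move=> S m Sa glbm Sreached.
  have [L La LS] := card_lt_list Sa.
  have [n Ln] := reached_list (fun x Lx => Sreached x (proj1 (LS x) Lx)).
  have [|k [glbk reachedk]] := @decode_move_answered (1, map f L) n.
    by rewrite /= decode_list; split=> //; split=> //; exists m; apply: is_glb_ext glbm => x; rewrite LS.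
  move: glbk; rewrite /= decode_list => /(is_glb_ext LS) /(is_glb_unique glbm) ->.
  exact: reachedk.
- move=> T j Tb lubj [n nj].
  have [L Lb LT] := card_lt_list Tb.
  have [|k [Lk reachedk]] := @decode_move_answered (2, map f L) n.
    by rewrite /= decode_list; split=> //; exists j; split=> //; apply: is_lub_ext lubj => x; rewrite LT.
  by exists (response k) => //; apply/LT; move: Lk; rewrite /= decode_list.
Qed.

End ExhaustivePlay.

Lemma strategy_prime_filter {d : Order.disp_t} {P : porderType d} (a b : cbound) (p q : P) :
  countable_type P -> E_omega_strategy a b (fun x => x = p) (fun x => x = q) ->
  exists2 F, prime_filter a b F & F p /\ ~ F q.
Proof.
move=> [f f_inj] [sigma sigma_wins]; exists (reached a b f p sigma).
  exact: reached_prime_filter f_inj sigma_wins.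
by split; [apply: reached_p|apply: not_reached_q sigma_wins].
Qed.

Theorem proposition5p2 (d : Order.disp_t) (P : porderType d)
  (alpha beta : cbound) :
  valid_bound alpha -> valid_bound beta ->
  (@representable d P alpha beta ->
     forall p q : P, ~ (p <= q)%O ->
       E_omega_strategy alpha beta (fun x => x = p) (fun x => x = q)) /\
  (countable_type P ->
     (forall p q : P, ~ (p <= q)%O ->
        E_omega_strategy alpha beta (fun x => x = p) (fun x => x = q)) ->
     @representable d P alpha beta).
Proof.
move=> _ _; split.
- move=> [X [h rep]] p q npq.
  have [x [hpx nhqx]] := representation_separates rep npq.
  exists (filter_strategy (inhabits p) (fun r => h r x)).
  apply: filter_strategy_wins (representation_prime_filter rep x) _ _ => [y -> //|y hry yq].
  by apply: nhqx; rewrite -yq.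
- move=> countP strategies; apply: prime_filters_representable => p q npq.
  exact: strategy_prime_filter countP (strategies p q npq).
Qed.
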